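(* Let $x\in\mathcal A^{\mathbb N}$ and let $\mathcal L=\mathcal L_x$ be the set of finite nonempty subwords of $x$. Let $w\in\mathcal L_n$ have minimal valid step $q$, and let $z=pw^{q\ast r}s$ and $z'=p'w^{q\ast r'}s'$ be exit words of $w$ with step $q$. If $z$ begins at position $i$ of $x$ and $z'$ begins at position $i'>i$ of $x$, then $i'\ge i+|z|-n$. Moreover, $|x_{[i,i'+|z'|-1]}|_w\ge r+r'$.
   Context: $|y|_w$ denotes the number of positions $j$, $1\le j\le |y|-|w|+1$, with $y_{[j,j+|w|-1]}=w$. For $n\ge 2$, $w\in\mathcal A^n$ and integer $1\le q\le n/2$ with $w_{[q+1,n]}=w_{[1,n-q]}$, $w^{q\ast r}$ is the word of length $n+(r-1)q$ with $(w^{q\ast r})_{[q(i-1)+1,q(i-1)+n]}=w$ for $1\le i\le r$; $q$ is valid for $w$ in $\mathcal L$ if moreover $w^{q\ast2}\in\mathcal L$; the minimal valid step is the least one. An exit word for $w$ with step $q$ is a word $z=pw^{q\ast r}s$, $r\ge1$, $1\le|p|,|s|\le q$, such that $z\in\mathcal L$; $pw^{q\ast r}$ is not a suffix of $w^{q\ast(r+1)}$ but $p_{[2,|p|]}w^{q\ast r}$ is; and $w^{q\ast r}s$ is not a prefix of $w^{q\ast(r+1)}$ but $w^{q\ast r}s_{[1,|s|-1]}$ is (with $p_{[2,1]}$, $s_{[1,0]}$ empty). *)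

From mathcomp Require Import all_boot.
Set Implicit Arguments. Unset Strict Implicit. Unset Printing Implicit Defensive.

Section Words.
Variable A : eqType.

(* The infinite word x is a function nat -> A; positions are 0-based. *)
(* factor x i m = x_{[i, i+m-1]} : the length-m block of x starting at i. *)
Definition factor (x : nat -> A) (i m : nat) : seq A := mkseq (fun j => x (i + j)) m.

Definition inL (x : nat -> A) (u : seq A) : Prop :=
  0 < size u /\ exists i, factor x i (size u) = u.

Definition occ (y w : seq A) : nat :=
  count (fun j => take (size w) (drop j y) == w) (iota 0 (size y - size w).+1).

(* w^{q*r} : for w with period q (w_{[q+1,n]} = w_{[1,n-q]}) and r >= 1, this is
   the word of length n+(r-1)q whose blocks at positions q(i-1)+1 .. q(i-1)+n equal w *)
Definition wpow (w : seq A) (q r : nat) : seq A :=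
  flatten (nseq r.-1 (take q w)) ++ w.

Definition valid_step (x : nat -> A) (w : seq A) (q : nat) : Prop :=
  [/\ 1 <= q, q.*2 <= size w, drop q w = take (size w - q) w & inL x (wpow w q 2)].

Definition min_valid_step (x : nat -> A) (w : seq A) (q : nat) : Prop :=
  valid_step x w q /\ forall q', valid_step x w q' -> q <= q'.

Definition exit_word (x : nat -> A) (w : seq A) (q : nat) (p : seq A) (r : nat) (s : seq A) : Prop :=
  [/\ 1 <= r,
      (1 <= size p <= q) && (1 <= size s <= q),
      inL x (p ++ wpow w q r ++ s),
      ~~ suffix (p ++ wpow w q r) (wpow w q r.+1) /\ suffix (behead p ++ wpow w q r) (wpow w q r.+1)
    & ~~ prefix (wpow w q r ++ s) (wpow w q r.+1) /\ prefix (wpow w q r ++ take (size s).-1 s) (wpow w q r.+1)].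

End Words.

From mathcomp Require Import all_boot zify.
Set Implicit Arguments. Unset Strict Implicit. Unset Printing Implicit Defensive.

(* Two exit words z = p w^{q*r} s and z' = p' w^{q*r'} s' of w, occurring at
   positions i < i' of x, overlap in fewer than q + 2 letters.
   - The border equation of a valid step makes every power w^{q*r} q-periodic,
     with w itself occurring at each of the positions 0, q, ..., (r-1)q.
   - The exit conditions say that z minus its first and last letter is still
     q-periodic (it is glued from a suffix and a prefix of w^{q*(r+1)}), while
     its first letter breaks the period: z_0 <> z_q.
   - If z' started at least q + 2 letters before the end of z, the letters of
     x at i' and i' + q would lie in the periodic interior of z, hence be equal,
     contradicting z'_0 <> z'_q.  So i + |z| <= i' + q + 1 <= i' + |w|.
   - Consequently the r occurrences of w inside z and the r' occurrences inside
     z' sit at pairwise distinct positions of x_[i, i' + |z'| - 1], giving the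
     lower bound r + r' on the number of occurrences of w there. *)

Section Periodicity.
Variables (A : eqType) (d : A).
Implicit Types s t u v : seq A.

(* s has period q (the default letter d is irrelevant: all indices are in range). *)
Definition periodic q s := forall k, k + q < size s -> nth d s k = nth d s (k + q).

Lemma periodic_border q s :
  q <= size s -> drop q s = take (size s - q) s -> periodic q s.
Proof.
move=> le_q_s border k lt_kq.
have := congr1 (nth d ^~ k) border.
rewrite /= nth_drop nth_take; last by lia.
by rewrite addnC.
Qed.

Lemma periodic_catr q t u : periodic q (t ++ u) -> periodic q u.
Proof.
move=> per_tu k lt_kq; have := per_tu (size t + k).
rewrite size_cat !nth_cat -addnA !ltnNge !leq_addr !addKn; apply; lia.
Qed.

Lemma periodic_catl q t u : periodic q (u ++ t) -> periodic q u.
Proof.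
move=> per_ut k lt_kq; have := per_ut k.
rewrite size_cat !nth_cat ifT ?ifT; [apply; lia | lia | lia].
Qed.

Lemma periodic_glue q a v b :
  periodic q (a ++ v) -> periodic q (v ++ b) -> q <= size v -> periodic q (a ++ v ++ b).
Proof.
move=> per_av per_vb le_q_v k; rewrite !size_cat => lt_kq.
case: (ltnP (k + q) (size a + size v)) => in_av.
  rewrite catA !(nth_cat _ (a ++ v)) size_cat in_av ifT; last by lia.
  by apply: per_av; rewrite size_cat.
rewrite !(nth_cat _ a) ifF ?ifF; try lia.
have -> : k + q - size a = (k - size a) + q by lia.
by apply: per_vb; rewrite size_cat; lia.
Qed.

Lemma periodic_cons_block q s :
  periodic q s -> q <= size s -> periodic q (take q s ++ s).
Proof.
move=> per_s le_q_s k; rewrite size_cat size_takel // => lt_kq.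
rewrite [nth _ _ (k + q)]nth_cat size_takel // ifF ?addnK; last by lia.
rewrite nth_cat size_takel //; case: ltnP => le_q_k; first by rewrite nth_take.
by rewrite per_s; [congr nth; lia | lia].
Qed.

End Periodicity.

(* This is the letter-level content of a left exit. *)
Lemma periodic_left_exit (A : eqType) (d : A) q (p W V : seq A) :
  1 <= size p <= q -> q <= size W -> periodic d q V -> size V = size W + q ->
  suffix (behead p ++ W) V -> ~~ suffix (p ++ W) V ->
  nth d (p ++ W) 0 != nth d (p ++ W) q.
Proof.
move=> /andP[p_gt0 le_p_q] le_q_W per_V size_V /suffixP[t V_eq] not_suffix.
case: p p_gt0 le_p_q not_suffix V_eq => [|a p1] //= _ le_p_q not_suffix V_eq.
move: size_V; rewrite V_eq !size_cat => size_t.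
case/lastP: t V_eq size_t => [|t' c] V_eq; rewrite ?size_rcons /= => size_t; first lia.
rewrite -cats1 -catA /= in V_eq.
have c_eq : c = nth d (c :: p1 ++ W) q.
  have := per_V (size t'); rewrite V_eq nth_cat ltnn subnn nth_cat ifF ?addKn.
  - by apply; rewrite size_cat /= size_cat; lia.
  - lia.
apply/eqP => a_eq; case/negP: not_suffix.
suff -> : a = c by rewrite V_eq suffix_suffix.
by rewrite a_eq c_eq; case: (q) le_p_q.
Qed.

Section Powers.
Variables (A : eqType) (w : seq A) (q : nat).

Lemma wpowS r : 0 < r -> wpow w q r.+1 = take q w ++ wpow w q r.
Proof. by case: r => // r _; rewrite /wpow /= catA. Qed.

Hypotheses (le_q_w : q <= size w) (border : drop q w = take (size w - q) w).

Lemma size_wpow r : size (wpow w q r) = r.-1 * q + size w.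
Proof.
elim: r => [|[|r] IH] //; rewrite wpowS // size_cat size_takel // IH /=; lia.
Qed.

Lemma wpow_prefix r : take (size w) (wpow w q r) = w.
Proof.
elim: r => [|[|r] IH]; rewrite ?take_size //.
rewrite wpowS // take_cat size_takel // ltnNge le_q_w /=.
by rewrite -(take_takel _ (leq_subr q _)) IH -border cat_take_drop.
Qed.

Lemma drop_wpow k r : k < r -> drop (k * q) (wpow w q r) = wpow w q (r - k).
Proof.
elim: k r => [|k IH] [|r] // lt_kr; first by rewrite drop0 subn0.
rewrite wpowS; last lia.
by rewrite mulSn drop_cat size_takel // ltnNge leq_addr /= addKn IH.
Qed.

Lemma wpow_periodic (d : A) r : periodic d q (wpow w q r).
Proof.
elim: r => [|[|r] IH]; try exact: periodic_border.
rewrite wpowS // -{1}(wpow_prefix r.+1) take_takel //.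
by apply: periodic_cons_block; rewrite // size_wpow; lia.
Qed.

Lemma wpow_occurrence (p s : seq A) r k : 0 < q -> k < r ->
  take (size w) (drop (size p + k * q) (p ++ wpow w q r ++ s)) = w.
Proof.
move=> q_gt0 lt_kr; have le_kq : k * q <= r.-1 * q by rewrite leq_mul2r; lia.
rewrite drop_cat ifF ?addKn; last lia.
rewrite drop_cat size_wpow ifT; last lia.
by rewrite drop_wpow // takel_cat ?wpow_prefix // size_wpow; lia.
Qed.

End Powers.

Section ExitWords.
Variables (A : eqType) (d : A) (x : nat -> A) (w : seq A) (q : nat).
Hypotheses (le_q_w : q <= size w) (border : drop q w = take (size w - q) w).

Lemma exit_word_left_break p r s : exit_word x w q p r s ->
  nth d (p ++ wpow w q r) 0 != nth d (p ++ wpow w q r) q.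
Proof.
case=> r_gt0 /andP[p_range _] _ [not_suffix left_in] _.
apply: (periodic_left_exit p_range _ (wpow_periodic le_q_w border d (r := r.+1))) => //.
- by rewrite size_wpow // (leq_trans le_q_w) ?leq_addl.
- by rewrite wpowS // size_cat size_takel // addnC.
Qed.

Lemma exit_word_inner_periodic p r s : exit_word x w q p r s ->
  forall k, 0 < k -> k + q + 2 <= size (p ++ wpow w q r ++ s) ->
  nth d (p ++ wpow w q r ++ s) k = nth d (p ++ wpow w q r ++ s) (k + q).
Proof.
case=> _ /andP[/andP[p_gt0 _] /andP[s_gt0 _]] _ [_ left_in] [_ right_in].
have per_V := wpow_periodic le_q_w border d (r := r.+1).
set W := wpow w q r; set u := behead p ++ W ++ take (size s).-1 s.
have per_u : periodic d q u.
  apply: periodic_glue.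
  - by case/suffixP: left_in per_V => t ->; apply: periodic_catr.
  - by case/prefixP: right_in per_V => t ->; apply: periodic_catl.
  - by rewrite size_wpow // (leq_trans le_q_w) ?leq_addl.
have size_u : size u = (size (p ++ W ++ s)).-2.
  rewrite !size_cat size_behead size_takel; lia.
have z_eq : p ++ W ++ s = head d p :: u ++ drop (size s).-1 s.
  by rewrite /u; case: (p) p_gt0 => //= a p1 _; rewrite -!catA cat_take_drop.
case=> // k _ lt_kq; rewrite z_eq addSn /= !(nth_cat _ u) ifT ?ifT.
- by apply: per_u; lia.
- lia.
- lia.
Qed.

End ExitWords.

Section Factors.
Variables (A : eqType) (x : nat -> A).

Lemma factor_nth (d : A) i L k : k < L -> nth d (factor x i L) k = x (i + k).
Proof. by move=> lt_kL; rewrite nth_mkseq. Qed.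

Lemma factor_window i L j m : j + m <= L ->
  take m (drop j (factor x i L)) = factor x (i + j) m.
Proof.
move=> le_jmL; apply: (@eq_from_nth _ (x i)).
  by rewrite size_takel ?size_mkseq // size_drop size_mkseq; lia.
move=> k; rewrite size_takel ?size_drop ?size_mkseq; last lia.
by move=> lt_km; rewrite nth_take // nth_drop !nth_mkseq ?addnA //; lia.
Qed.

End Factors.

Lemma occ_lower_bound (A : eqType) (y u : seq A) (js : seq nat) : uniq js ->
  (forall j, j \in js -> j + size u <= size y /\ take (size u) (drop j y) = u) ->
  size js <= occ y u.
Proof.
move=> uniq_js occ_js; rewrite /occ -size_filter; apply: uniq_leq_size => // j /occ_js[le_j occ_j].
by rewrite mem_filter occ_j eqxx mem_iota /=; lia.
Qed.

Lemma uniq_progressions q a b m n : 0 < q -> a + m.-1 * q < b ->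
  uniq ([seq a + k * q | k <- iota 0 m] ++ [seq b + k * q | k <- iota 0 n]).
Proof.
move=> q_gt0 lt_ab.
have progression_inj c : injective (fun k => c + k * q).
  by move=> k1 k2 /eqP; rewrite eqn_add2l eqn_pmul2r // => /eqP.
rewrite cat_uniq !map_inj_uniq ?iota_uniq ?andbT //=.
apply/hasPn => _ /mapP[k2 _ ->]; apply/mapP => -[k1]; rewrite mem_iota => lt_k1 eq_k.
have : k1 * q <= m.-1 * q by rewrite leq_mul2r; lia.
lia.
Qed.

Section Overlap.
Variables (A : eqType) (x : nat -> A) (w : seq A) (q : nat).
Hypotheses (le_q_w : q <= size w) (border : drop q w = take (size w - q) w).

Lemma size_exit_word p r s :
  size (p ++ wpow w q r ++ s) = size p + r.-1 * q + size w + size s.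
Proof. by rewrite size_cat [size (_ ++ s)]size_cat size_wpow // !addnA. Qed.

Lemma placed_letter (d : A) (z : seq A) i k :
  factor x i (size z) = z -> k < size z -> x (i + k) = nth d z k.
Proof. by move=> place lt_k; rewrite -place factor_nth. Qed.

(* Two exit words placed at i < i' in x overlap in at most q + 1 letters:
   otherwise x_i' and x_(i'+q) lie in the q-periodic interior of the first one,
   whereas the second one starts by breaking the period. *)
Lemma exit_words_overlap p r s p' r' s' i i' :
  exit_word x w q p r s -> exit_word x w q p' r' s' ->
  factor x i (size (p ++ wpow w q r ++ s)) = p ++ wpow w q r ++ s ->
  factor x i' (size (p' ++ wpow w q r' ++ s')) = p' ++ wpow w q r' ++ s' ->
  i < i' -> i + size (p ++ wpow w q r ++ s) <= i' + q + 1.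
Proof.
move=> exit exit' place place' lt_ii'; set d := x 0. (* any default letter *)
rewrite leqNgt; apply/negP => overlap.
have lt_q : q < size (p' ++ wpow w q r').
  case: exit' => _ /andP[/andP[p'_gt0 _] _] _ _ _.
  by rewrite size_cat size_wpow //; move: (_ * q) => m; lia.
have letter' k : k <= q -> x (i' + k) = nth d (p' ++ wpow w q r') k.
  move=> le_kq; rewrite (placed_letter d place'); last by rewrite catA size_cat; lia.
  by rewrite catA nth_cat ifT //; lia.
have := exit_word_left_break d le_q_w border exit'.
rewrite -(letter' 0) // -letter' // addn0 (_ : i' = i + (i' - i)); last by lia.
rewrite -addnA !(placed_letter d place); try lia.
by rewrite (exit_word_inner_periodic d le_q_w border exit) ?eqxx //; lia.
Qed.

Lemma exit_word_occurrence p r s i0 i L k :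
  0 < q -> factor x i0 (size (p ++ wpow w q r ++ s)) = p ++ wpow w q r ++ s ->
  i <= i0 -> i0 + size (p ++ wpow w q r ++ s) <= i + L -> k < r ->
  take (size w) (drop (i0 - i + size p + k * q) (factor x i L)) = w /\
  i0 - i + size p + k * q + size w <= L.
Proof.
move=> q_gt0 place le_i_i0 inside lt_kr.
have le_kq : k * q <= r.-1 * q by rewrite leq_mul2r; lia.
have in_z : size p + k * q + size w <= size (p ++ wpow w q r ++ s).
  by rewrite size_cat [size (_ ++ s)]size_cat size_wpow //; lia.
split; last by lia.
rewrite factor_window; last by lia.
rewrite (_ : i + _ = i0 + (size p + k * q)); last by lia.
by rewrite -(factor_window x i0 in_z) place wpow_occurrence.
Qed.

(* Hence the r occurrences of w in z and the r' occurrences in z' are pairwise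
   distinct positions of the window x_[i, i' + |z'| - 1]. *)
Lemma occ_exit_words p r s p' r' s' i i' :
  0 < q -> q.*2 <= size w -> exit_word x w q p r s -> exit_word x w q p' r' s' ->
  factor x i (size (p ++ wpow w q r ++ s)) = p ++ wpow w q r ++ s ->
  factor x i' (size (p' ++ wpow w q r' ++ s')) = p' ++ wpow w q r' ++ s' ->
  i < i' -> r + r' <= occ (factor x i (i' + size (p' ++ wpow w q r' ++ s') - i)) w.
Proof.
move=> q_gt0 le_2q_w exit exit' place place' lt_ii'.
have overlap := exit_words_overlap exit exit' place place' lt_ii'.
have s_gt0 : 0 < size s by case: exit => _ /andP[_ /andP[]].
have p'_gt0 : 0 < size p' by case: exit' => _ /andP[/andP[]].
set L := i' + _ - i.
have in_window : i + size (p ++ wpow w q r ++ s) <= i + L /\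
                 i' + size (p' ++ wpow w q r' ++ s') <= i + L.
  by move: overlap; rewrite /L !size_exit_word; move: (_ * q) (_ * q) => m m'; lia.
(* positions relative to the window start i; the first exit word starts at i *)
set js := [seq i - i + size p + k * q | k <- iota 0 r] ++
          [seq i' - i + size p' + k * q | k <- iota 0 r'].
have -> : r + r' = size js by rewrite size_cat !size_map !size_iota.
apply: occ_lower_bound => [|j].
  apply: uniq_progressions => //.
  by move: overlap; rewrite size_exit_word; move: (_ * q) => m; lia.
rewrite mem_cat => /orP[] /mapP[k]; rewrite mem_iota => /andP[_ lt_k] ->.
- have [occ_k in_k] := exit_word_occurrence q_gt0 place (leqnn i) in_window.1 lt_k.
  by rewrite size_mkseq.
- have [occ_k in_k] := exit_word_occurrence q_gt0 place' (ltnW lt_ii') in_window.2 lt_k.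
  by rewrite size_mkseq.
Qed.

End Overlap.

Theorem mainTheorem15 (A : eqType) (x : nat -> A) (w : seq A) (q : nat)
  (p : seq A) (r : nat) (s : seq A) (p' : seq A) (r' : nat) (s' : seq A) (i i' : nat) :
  2 <= size w -> inL x w ->
  min_valid_step x w q ->
  exit_word x w q p r s -> exit_word x w q p' r' s' ->
  factor x i (size (p ++ wpow w q r ++ s)) = p ++ wpow w q r ++ s ->
  factor x i' (size (p' ++ wpow w q r' ++ s')) = p' ++ wpow w q r' ++ s' ->
  i < i' ->
  i + size (p ++ wpow w q r ++ s) - size w <= i' /\
  r + r' <= occ (factor x i (i' + size (p' ++ wpow w q r' ++ s') - i)) w.
Proof.
move=> _ _ [[q_gt0 le_2q_w border _] _] exit exit' place place' lt_ii'.
have le_q_w : q <= size w by lia.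
have overlap := exit_words_overlap le_q_w border exit exit' place place' lt_ii'.
split; first lia.
exact: (occ_exit_words le_q_w border q_gt0 le_2q_w exit exit' place place' lt_ii').
Qed.
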